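(* For all $n\ge1$ and $j\in\{1,2,3\}$, $$\|\varphi^{(j)}_n\|^2=\frac{\mu_+^{n+1}-\mu_-^{n+1}}{\mu_+-\mu_-},$$ where $\mu_\pm=(1\pm\sqrt{1+4|\lambda|^2})/2$. Consequently, with $\mu=\mu_-/\mu_+\in(-1,0]$ and $\alpha_n=\|\varphi_{n-1}\|^2/\|\varphi_n\|^2$ (convention $\varphi_0=1$), $$\alpha_n=\frac1{\mu_+}\,\frac{1-\mu^n}{1-\mu^{n+1}}.$$
   Context: $\lambda\in\mathbb C$. For $L\in\mathbb N$, $\varphi_L\in\bigotimes_{x=1}^{3L}\mathbb C^2$ is $\varphi_L=\sum_{\mathbf D}\lambda^{\#(\mathbf D)}|\boldsymbol\sigma(\mathbf D)\rangle$, summing over all tilings $\mathbf D$ of $[1,3L]$ obtained from $L$ consecutive monomers (length 3, content $100$) by replacing some disjoint pairs of consecutive monomers by a dimer (length 6, content $011000$); $\#(\mathbf D)$ is the number of dimers, $\boldsymbol\sigma(\mathbf D)$ the concatenated 0/1 content, and $|\boldsymbol\sigma\rangle$ the orthonormal product basis. For $j\in\{1,2\}$, $\varphi^{(j)}_L$ on $[1,3(L-1)+j]$ is defined likewise from $L-1$ monomers followed by a right $j$-monomer (content $1$, resp. $10$), where the last monomer and the right $j$-monomer may also be replaced by a truncated $j$-dimer (content $0110$, resp. $01100$), counted in $\#(\mathbf D)$. $\varphi^{(3)}_L=\varphi_L$. *)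

From HB Require Import structures.
From mathcomp Require Import all_boot all_order all_algebra.
From mathcomp Require Import complex.
Set Implicit Arguments. Unset Strict Implicit. Unset Printing Implicit Defensive.
Import Order.TTheory GRing.Theory Num.Theory.
Local Open Scope ring_scope.

Definition sqmod (R : rcfType) (z : R[i]) : R :=
  let: Complex a b := z in a ^+ 2 + b ^+ 2.

(* A tiling D built from L consecutive monomers (indexed 0..L-1) is encoded by
   the set S of (0-based) indices k of the monomers that are the LEFT member
   of a pair (k, k+1) replaced by a dimer. *)
Definition valid_tiling (L : nat) (S : {set 'I_L}) : bool :=
  [forall i : 'I_L, (i \in S) ==>
     ((i.+1 < L)%N && [forall k : 'I_L, (k \in S) ==> (val k != i.+1)])].

Definition memS (L : nat) (S : {set 'I_L}) (k : nat) : bool :=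
  [exists i : 'I_L, (i \in S) && (val i == k)].

(* Content of site x (0-based, x < 3L) of the full tiling: monomer k occupies
   sites 3k,3k+1,3k+2.  Monomer content is 100; a dimer on (k,k+1) has
   content 011000 = 011 (on monomer k) followed by 000 (on monomer k+1). *)
Definition site (L : nat) (S : {set 'I_L}) (x : nat) : bool :=
  let k := (x %/ 3)%N in let r := (x %% 3)%N in
  if memS S k then r != 0%N
  else if (0 < k)%N && memS S k.-1 then false
  else r == 0%N.

Definition chain_len (j L : nat) : nat := (3 * L + j - 3)%N.

(* phi^(j)_L as the coefficient vector in the orthonormal product basis
   |sigma>, sigma : {0,1}^[1, 3(L-1)+j].  The tilings of phi^(j)_L are the
   tilings of L monomers truncated to their first 3(L-1)+j sites: the last
   monomer becomes the right j-monomer (content 1 / 10) and a dimer on the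
   last pair becomes the truncated j-dimer (content 0110 / 01100).
   phi^(3)_L = phi_L.  *)
Definition phi (R : rcfType) (lam : R[i]) (j L : nat)
    (sigma : {ffun 'I_(chain_len j L) -> bool}) : R[i] :=
  \sum_(S : {set 'I_L} | valid_tiling S &&
          [forall x : 'I_(chain_len j L), sigma x == site S x])
     lam ^+ #|S|.
Arguments phi {R} lam j L sigma.

Definition normsq (R : rcfType) (lam : R[i]) (j L : nat) : R :=
  \sum_(sigma : {ffun 'I_(chain_len j L) -> bool}) sqmod (phi lam j L sigma).

Definition mu_plus (R : rcfType) (lam : R[i]) : R :=
  (1 + Num.sqrt (1 + 4 * sqmod lam)) / 2.
Definition mu_minus (R : rcfType) (lam : R[i]) : R :=
  (1 - Num.sqrt (1 + 4 * sqmod lam)) / 2.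

(* alpha_n = ||phi_{n-1}||^2 / ||phi_n||^2  (phi_0 = 1: the empty chain) *)
Definition alpha (R : rcfType) (lam : R[i]) (n : nat) : R :=
  normsq lam 3 n.-1 / normsq lam 3 n.

From HB Require Import structures.
From mathcomp Require Import all_boot all_order all_algebra.
From mathcomp Require Import complex.
From mathcomp Require Import ring lra zify.
Set Implicit Arguments. Unset Strict Implicit. Unset Printing Implicit Defensive.
Import Order.TTheory GRing.Theory Num.Theory.
Local Open Scope ring_scope.

(* The middle site of each monomer reads 1 exactly when that monomer is the left
   half of a dimer, so distinct tilings give orthogonal basis vectors and
   ||phi^(j)_L||^2 = sum over tilings D of |lam|^(2 #D).  Splitting on a dimer
   over the last admissible pair of monomers shows that this sum c_L obeys
   c_0 = c_1 = 1 and c_(m+2) = c_(m+1) + |lam|^2 c_m, whose characteristic roots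
   are mu_+ and mu_-; Binet's formula gives the norm, and alpha_n is the ratio
   of two consecutive Binet numbers. *)

Section SquaredModulus.
Variable R : rcfType.
Implicit Types a b : R[i].

Lemma sqmodM a b : sqmod (a * b) = sqmod a * sqmod b.
Proof. by case: a => a1 a2; case: b => b1 b2 /=; ring. Qed.

Lemma sqmod1 : sqmod (1 : R[i]) = 1.
Proof. by rewrite /=; ring. Qed.

Lemma sqmodX a k : sqmod (a ^+ k) = sqmod a ^+ k.
Proof. by elim: k => [|k IHk]; rewrite ?sqmod1 // !exprS sqmodM IHk. Qed.

Lemma sqmod_ge0 a : 0 <= sqmod a.
Proof. by case: a => a1 a2 /=; rewrite addr_ge0 ?sqr_ge0. Qed.

Lemma sqmod_sum_fibres (T U : finType) (P : pred T) (f : T -> U) (w : T -> R[i]) :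
  {in P &, injective f} ->
  \sum_(u : U) sqmod (\sum_(t | P t && (f t == u)) w t) = \sum_(t | P t) sqmod (w t).
Proof.
move=> f_inj; rewrite (partition_big f predT) //=; apply: eq_bigr => u _.
have [t0 /andP [Pt0 /eqP ft0] | fibre0] := pickP (fun t => P t && (f t == u)).
  have fibreE : (fun t => P t && (f t == u)) =1 pred1 t0.
    move=> t /=; apply/andP/eqP => [[Pt /eqP ft] | ->]; last by rewrite ft0.
    by apply: f_inj; rewrite ?ft ?ft0.
  by rewrite !(big_pred1 t0 fibreE).
by rewrite !big_pred0 //= expr0n addr0.
Qed.

End SquaredModulus.

Section Tilings.
Variable L : nat.
Implicit Types S : {set 'I_L}.

Lemma valid_tilingP S :
  reflect (forall i : 'I_L, i \in S ->
             (i.+1 < L)%N /\ forall k : 'I_L, k \in S -> val k <> i.+1)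
          (valid_tiling S).
Proof.
apply: (iffP forallP) => [V i iS | V i].
  have /andP [iL /forallP noS] := implyP (V i) iS.
  by split=> // k kS; apply/eqP; apply: (implyP (noS k)).
apply/implyP => /V [iL noS]; rewrite iL; apply/forallP => k.
by apply/implyP => /noS /eqP.
Qed.

Lemma memS_ord S (i : 'I_L) : memS S i = (i \in S).
Proof.
apply/existsP/idP => [[k /andP [kS /eqP ki]] | iS]; last by exists i; rewrite iS eqxx.
by rewrite (_ : i = k) //; apply: val_inj.
Qed.

Lemma site_mid S i : site S (3 * i + 1) = memS S i.
Proof.
rewrite /site (_ : (3 * i + 1) %/ 3 = i)%N; last by rewrite mulnC divnMDl // addn0.
rewrite (_ : (3 * i + 1) %% 3 = 1)%N; last by rewrite mulnC modnMDl.
by case: (memS S i) => //=; case: ifP.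
Qed.

Definition site_vec j S : {ffun 'I_(chain_len j L) -> bool} :=
  [ffun x : 'I_(chain_len j L) => site S x].

Lemma site_vec_inj j : (1 <= j)%N -> {in @valid_tiling L &, injective (site_vec j)}.
Proof.
move=> j_gt0 S1 S2 /valid_tilingP V1 /valid_tilingP V2 eqS; apply/setP => i.
have [iL | Li] := ltnP i.+1 L.
  have mid : (3 * i + 1 < chain_len j L)%N by rewrite /chain_len; lia.
  have := congr1 (fun s : {ffun _ -> bool} => s (Ordinal mid)) eqS.
  by rewrite !ffunE /= !site_mid !memS_ord.
by apply/idP/idP => [/V1 | /V2] []; rewrite ltnNge Li.
Qed.

Lemma forall_siteE j S (sigma : {ffun 'I_(chain_len j L) -> bool}) :
  [forall x, sigma x == site S x] = (site_vec j S == sigma).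
Proof.
apply/forallP/eqP => [eqs | <- x]; last by rewrite ffunE.
by apply/ffunP => x; rewrite ffunE (eqP (eqs x)).
Qed.

End Tilings.

Lemma normsq_tilings (R : rcfType) (lam : R[i]) (j L : nat) : (1 <= j)%N ->
  normsq lam j L = \sum_(S : {set 'I_L} | valid_tiling S) sqmod lam ^+ #|S|.
Proof.
move=> j_gt0; under [RHS]eq_bigr do rewrite -sqmodX.
rewrite -(sqmod_sum_fibres _ (site_vec_inj j_gt0)).
by apply: eq_bigr => sigma _; rewrite /phi; under eq_bigl do rewrite forall_siteE.
Qed.

Section DimerCount.
Variables (R : pzSemiRingType) (x : R) (L : nat).
Implicit Types S : {set 'I_L}.

Definition dimers_within m S : bool := [forall i in S, (i.+1 < m)%N].

Definition tiling_weight m : R :=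
  \sum_(S | valid_tiling S && dimers_within m S) x ^+ #|S|.

Lemma dimers_withinP m S :
  reflect (forall i : 'I_L, i \in S -> (i.+1 < m)%N) (dimers_within m S).
Proof. exact: forall_inP. Qed.

Lemma valid_tiling_subset S1 S2 :
  S1 \subset S2 -> valid_tiling S2 -> valid_tiling S1.
Proof.
move=> /subsetP sub12 /valid_tilingP V; apply/valid_tilingP => i /sub12 /V [iL noS].
by split=> // k /sub12 /noS.
Qed.

Lemma tiling_weight_small m : (m <= 1)%N -> tiling_weight m = 1.
Proof.
move=> m_le1; rewrite /tiling_weight (big_pred1 set0) ?cards0 // => S /=.
apply/andP/eqP => [[_ /dimers_withinP within] | ->].
  by apply/setP => i; rewrite inE; apply/negP => /within; lia.
by split; [apply/(@valid_tilingP L) | apply/dimers_withinP] => i; rewrite inE.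
Qed.

Lemma tiling_weight_all :
  tiling_weight L = \sum_(S : {set 'I_L} | valid_tiling S) x ^+ #|S|.
Proof.
apply: eq_bigl => S; apply/andb_idr => /valid_tilingP V.
by apply/dimers_withinP => i /V [].
Qed.

Lemma dimers_within_notin (i : 'I_L) S :
  valid_tiling S && dimers_within i.+2 S && (i \notin S)
  = valid_tiling S && dimers_within i.+1 S.
Proof.
rewrite -andbA; apply/and3P/andP.
  case=> vS /dimers_withinP within iS.
  split=> //; apply/dimers_withinP => k kS.
  have : k != i by apply: contraNneq iS => <-.
  by rewrite -val_eqE /=; have := within k kS; lia.
case=> vS /dimers_withinP within; split=> //.
  by apply/dimers_withinP => k /within; lia.
by apply/negP => /within; lia.
Qed.

Lemma dimers_within_setU1 (i : 'I_L) S : (i.+1 < L)%N ->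
  valid_tiling (i |: S) && dimers_within i.+2 (i |: S) && (i \notin S)
  = valid_tiling S && dimers_within i S.
Proof.
move=> iL; rewrite -andbA; apply/and3P/andP.
  case=> vS' /dimers_withinP within iS.
  split; first exact: valid_tiling_subset (subsetUr _ _) vS'.
  apply/dimers_withinP => k kS.
  have : k != i by apply: contraNneq iS => <-.
  have [_ /(_ i (setU11 _ _)) /= ik] := valid_tilingP _ vS' k (setU1r _ kS).
  by rewrite -val_eqE /=; have := within k (setU1r _ kS); lia.
case=> vS /dimers_withinP within.
have iS : i \notin S by apply/negP => /within; lia.
move/valid_tilingP: vS => V; split=> //.
  apply/valid_tilingP => a /setU1P [-> | aS].
    by split=> // k /setU1P [-> /= | /within /=]; lia.
  have [aL noS] := V a aS; split=> // k /setU1P [-> /= | /noS //].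
  by have := within a aS; lia.
apply/dimers_withinP => a /setU1P [-> // | /within]; lia.
Qed.

Lemma setU1D1_eq (i : 'I_L) S : ((i |: S) :\ i == S) = (i \notin S).
Proof. by apply/eqP/idP => [<- | /setU1K]; rewrite ?setD11. Qed.

(* Split according to whether a dimer sits on the last admissible pair (i, i+1). *)
Lemma tiling_weight_rec (i : 'I_L) : (i.+1 < L)%N ->
  tiling_weight i.+2 = tiling_weight i.+1 + x * tiling_weight i.
Proof.
move=> iL; rewrite /tiling_weight (bigID (fun S => i \in S)) /= addrC.
congr (_ + _); first by apply: eq_bigl => S; rewrite dimers_within_notin.
rewrite mulr_sumr (reindex_onto (fun S => i |: S) (fun S => S :\ i)) /=; last first.
  by move=> S /andP [_ iS]; rewrite setD1K.
apply: eq_big => [S | S]; first by rewrite setU11 andbT setU1D1_eq dimers_within_setU1.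
by rewrite setU1D1_eq => /andP [_ iS]; rewrite cardsU1 iS exprS.
Qed.

Lemma sum_valid_tilings_rec (c : nat -> R) :
  c 0%N = 1 -> c 1%N = 1 -> (forall m, c m.+2 = c m.+1 + x * c m) ->
  \sum_(S : {set 'I_L} | valid_tiling S) x ^+ #|S| = c L.
Proof.
move=> c0 c1 cS; rewrite -tiling_weight_all.
suff : forall m, (m <= L)%N -> tiling_weight m = c m by apply.
elim/ltn_ind => -[|[|m]] IHm mL; try by rewrite tiling_weight_small.
have /= -> := @tiling_weight_rec (Ordinal (ltnW mL)) mL.
by rewrite cS !IHm //; lia.
Qed.

End DimerCount.

Definition binet (F : fieldType) (p q : F) (m : nat) : F :=
  (p ^+ m.+1 - q ^+ m.+1) / (p - q).

Section Binet.
Variables (F : fieldType) (x p q : F).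
Hypotheses (p_root : p ^+ 2 = p + x) (q_root : q ^+ 2 = q + x) (p_neq_q : p != q).

Lemma root_exprSS t : t ^+ 2 = t + x -> forall k, t ^+ k.+2 = t ^+ k.+1 + x * t ^+ k.
Proof.
move=> t_root k.
by rewrite exprSr [t ^+ k.+1]exprSr -mulrA -expr2 t_root mulrDr [_ * x]mulrC.
Qed.

Lemma binet0 : binet p q 0 = 1.
Proof. by rewrite /binet !expr1 divff // subr_eq0. Qed.

Lemma binet1 : binet p q 1 = 1.
Proof. by rewrite /binet p_root q_root opprD addrACA subrr addr0 divff // subr_eq0. Qed.

Lemma binetSS m : binet p q m.+2 = binet p q m.+1 + x * binet p q m.
Proof.
rewrite /binet (root_exprSS p_root m.+1) (root_exprSS q_root m.+1).
by rewrite opprD addrACA -mulrBr mulrDl mulrA.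
Qed.

End Binet.

Lemma binet_ratio (F : fieldType) (p q : F) n : p != 0 -> p != q ->
  binet p q n / binet p q n.+1 = p^-1 * ((1 - (q / p) ^+ n.+1) / (1 - (q / p) ^+ n.+2)).
Proof.
move=> p0 pq.
have normalize k : 1 - (q / p) ^+ k = (p ^+ k - q ^+ k) / p ^+ k.
  by rewrite expr_div_n mulrBl divff ?expf_neq0.
have pn0 := expf_neq0 n.+1 p0.
rewrite /binet !normalize !invf_div.
(* Hiding the last denominator: the identity holds even where it vanishes. *)
move: (p ^+ n.+2 - q ^+ n.+2)^-1 => b.
rewrite [p ^+ n.+2]exprS.
move: pn0; move: (p ^+ n.+1) (q ^+ n.+1) => pn qn pn0.
by field; rewrite pn0 p0 subr_eq0.
Qed.

Lemma sqrt_disc_ge1 (R : rcfType) (x : R) : 0 <= x -> 1 <= Num.sqrt (1 + 4 * x).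
Proof. by move=> x_ge0; rewrite -{1}sqrtr1 ler_sqrt; lra. Qed.

Lemma half_root (R : numFieldType) (s x : R) :
  s ^+ 2 = 1 + 4 * x -> ((1 + s) / 2) ^+ 2 = (1 + s) / 2 + x.
Proof.
move=> sE; transitivity ((1 + 2 * s + s ^+ 2) / 4); first by field.
by rewrite sE; field.
Qed.

Lemma root_ratio_bounds (R : realFieldType) (s : R) :
  1 <= s -> -1 < ((1 - s) / 2) / ((1 + s) / 2) <= 0.
Proof.
move=> s_ge1; have h_gt0 : 0 < (1 + s) / 2 by lra.
by rewrite ltr_pdivlMr // ler_pdivrMr //; apply/andP; split; lra.
Qed.

Theorem lemma2p13 (R : rcfType) (lam : R[i]) :
  (forall (n j : nat), (1 <= n)%N -> (1 <= j <= 3)%N ->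
     normsq lam j n =
       (mu_plus lam ^+ n.+1 - mu_minus lam ^+ n.+1) / (mu_plus lam - mu_minus lam))
  /\ (let mu := mu_minus lam / mu_plus lam in
      (-1 < mu <= 0) /\
      (forall n : nat, (1 <= n)%N ->
         alpha lam n = (mu_plus lam)^-1 * ((1 - mu ^+ n) / (1 - mu ^+ n.+1)))).
Proof.
have x_ge0 : 0 <= sqmod lam := sqmod_ge0 lam.
have s_ge1 := sqrt_disc_ge1 x_ge0.
have sE : Num.sqrt (1 + 4 * sqmod lam) ^+ 2 = 1 + 4 * sqmod lam by rewrite sqr_sqrtr; lra.
have p_root : mu_plus lam ^+ 2 = mu_plus lam + sqmod lam := half_root sE.
have q_root : mu_minus lam ^+ 2 = mu_minus lam + sqmod lam.
  by apply: half_root; rewrite sqrrN.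
have p_neq_q : mu_plus lam != mu_minus lam by rewrite /mu_plus /mu_minus; apply/eqP; lra.
have p_neq0 : mu_plus lam != 0 by rewrite /mu_plus; apply/eqP; lra.
have normsqE j n : (1 <= j)%N -> normsq lam j n = binet (mu_plus lam) (mu_minus lam) n.
  move=> j_gt0; rewrite normsq_tilings //; apply: (@sum_valid_tilings_rec _ _ _ (binet _ _)).
  - exact: binet0.
  - exact: binet1 p_root q_root p_neq_q.
  - exact: binetSS p_root q_root.
split=> [n j _ /andP [j_gt0 _] | mu]; first exact: normsqE.
split=> [|[//|n] _]; first exact: root_ratio_bounds.
by rewrite /alpha !normsqE //= binet_ratio.
Qed.
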